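(* Let $a,b,c,d\ge1$ be integers and let $$M=\begin{bmatrix}a&-1&-1&-1\\-1&b&-1&-1\\-1&-1&c&-1\\-1&-1&-1&d\end{bmatrix}.$$ If $\det M=0$ and $\min\{a,b,c,d\}=3$, then $a=b=c=d=3$. *)

From mathcomp Require Import all_boot all_order all_algebra.
Set Implicit Arguments. Unset Strict Implicit. Unset Printing Implicit Defensive.
Import Order.TTheory GRing.Theory Num.Theory.
Local Open Scope ring_scope.

Definition Mabcd (a b c d : int) : 'M[int]_4 :=
  \matrix_(i < 4, j < 4)
    if i == j then [:: a; b; c; d]`_i else -1.

(* Writing x_i for the i-th diagonal entry plus one, the matrix is diag(x) - J
   with J the all-ones matrix, so det M = prod_i x_i - sum_i prod_(j != i) x_j:
   the determinant vanishes exactly when sum_i 1/x_i = 1.  A minimum of 3 makes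
   every x_i >= 4, so every 1/x_i <= 1/4, and the sum reaches 1 only if all the
   x_i equal 4. *)

From mathcomp Require Import all_boot all_order all_algebra.
From mathcomp Require Import ring zify.

Set Implicit Arguments.
Unset Strict Implicit.
Unset Printing Implicit Defensive.

Import Order.TTheory GRing.Theory Num.Theory.
Local Open Scope ring_scope.

Lemma sum_prod_neq_eq_prod_ge_card (R : numDomainType) n (x : 'I_n -> R) :
  (forall i, n%:R <= x i) -> \sum_i \prod_(j | j != i) x j = \prod_i x i ->
  forall i, x i = n%:R.
Proof.
move=> x_ge sum_eq_prod i.
pose P k := \prod_(j | j != k) x j.
have P_gt0 k : 0 < P k.
  apply: prodr_gt0 => j _; apply: lt_le_trans (x_ge j).
  by rewrite ltr0n (leq_ltn_trans _ (ltn_ord j)).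
have xP k : x k * P k = \prod_j x j by rewrite [RHS](bigD1 k).
have sum_eq0 : \sum_k (x k - n%:R) * P k = 0.
  under eq_bigr do rewrite mulrBl xP.
  by rewrite sumrB sumr_const card_ord -mulr_sumr sum_eq_prod mulr_natl subrr.
have term_ge0 k : 0 <= (x k - n%:R) * P k.
  by rewrite mulr_ge0 ?subr_ge0 ?x_ge ?ltW.
have /(_ i isT)/eqP := psumr_eq0P (fun k _ => term_ge0 k) sum_eq0.
by rewrite mulf_eq0 (gt_eqF (P_gt0 i)) orbF subr_eq0 => /eqP.
Qed.

Lemma det_mx33 (R : comPzRingType) (A : 'M[R]_3) : \det A =
  A 0 0 * (A 1 1 * A 2 2 - A 1 2 * A 2 1) - A 0 1 * (A 1 0 * A 2 2 - A 1 2 * A 2 0)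
  + A 0 2 * (A 1 0 * A 2 1 - A 1 1 * A 2 0).
Proof.
rewrite (expand_det_row _ 0) /cofactor !big_ord_recr big_ord0 /= add0r.
rewrite !(expand_det_row _ 0) /cofactor !big_ord_recr !big_ord0 /= !add0r.
rewrite !det_mx11 !mxE.
pose a (i j : nat) := A (inord i) (inord j).
have aE i j : A i j = a i j by rewrite /a !inord_val.
rewrite !aE /bump /= !modn_small //.
ring.
Qed.

Definition Mabcd_shift (a b c d : int) (i : 'I_4) : int := [:: a; b; c; d]`_i + 1.

Lemma det_Mabcd (a b c d : int) (x := Mabcd_shift a b c d) :
  \det (Mabcd a b c d) = \prod_i x i - \sum_i \prod_(j | j != i) x j.
Proof.
under [X in _ - X]eq_bigr => i _ do rewrite big_mkcond.
rewrite (expand_det_row _ 0) /cofactor !big_ord_recr !big_ord0 /=.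
rewrite !det_mx33 !mxE /x /Mabcd_shift /=.
ring.
Qed.

Theorem lemma3p6 (a b c d : int) :
  1 <= a -> 1 <= b -> 1 <= c -> 1 <= d ->
  \det (Mabcd a b c d) = 0 ->
  Num.min (Num.min a b) (Num.min c d) = 3 ->
  [/\ a = 3, b = 3, c = 3 & d = 3].
Proof.
move=> _ _ _ _ det0 min3.
have : 3 <= Num.min (Num.min a b) (Num.min c d) by rewrite min3.
rewrite !le_min => /andP[/andP[a_ge3 b_ge3] /andP[c_ge3 d_ge3]].
have x_ge4 : forall i, 4%:R <= Mabcd_shift a b c d i.
  by move=> [[|[|[|[|i]]]] i_lt4]; rewrite /Mabcd_shift /=; lia.
have /(sum_prod_neq_eq_prod_ge_card x_ge4) x_eq4 :
    \sum_i \prod_(j | j != i) Mabcd_shift a b c d j = \prod_i Mabcd_shift a b c d i.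
  by apply/eqP; rewrite eq_sym -subr_eq0 -det_Mabcd det0.
by split; apply: (addIr 1);
  [exact: (x_eq4 0) | exact: (x_eq4 1) | exact: (x_eq4 2) | exact: (x_eq4 3)].
Qed.
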